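(* For every sentence $\alpha$ there is a sentence $\gamma$ in assignment normal form such that $\alpha\leftrightarrow\gamma$ is a theorem of $\mathbf{LEL}$.
   Context: Fix a nonempty finite set $\mathbf{A}$ of agents, a countable set $\mathbf{X}$ of variables disjoint from $\mathbf{A}$, and a countable set $\mathbf{P}$ of predicate letters. Formulas and free variables: $\phi ::= p_x \mid \top \mid \neg\phi \mid (\phi\wedge\phi) \mid [x:=a]\phi \mid \mathsf{K}_X\alpha$ ($p\in\mathbf{P}$, $x\in\mathbf{X}$, $a\in\mathbf{A}$, $X\subseteq\mathbf{X}$ finite possibly empty, $\alpha$ with no free variables), $FV(p_x)=\{x\}$, $FV(\top)=\emptyset$, $FV(\neg\phi)=FV(\phi)$, $FV(\phi\wedge\psi)=FV(\phi)\cup FV(\psi)$, $FV([x:=a]\phi)=FV(\phi)\setminus\{x\}$, $FV(\mathsf{K}_X\alpha)=X$. Sentences have no free variables. $\bot:=\neg\top$, $\langle x:=a\rangle\phi:=\neg[x:=a]\neg\phi$. $\phi[y/x]$ replaces free occurrences of $x$ by $y$ (including in index sets of $\mathsf{K}_X$); admissible if $x$ has no free occurrence within the scope of any $[y:=b]$. $[\vec{x}:=\vec{a}]\phi$ abbreviates $[x_1:=a_1]\cdots[x_n:=a_n]\phi$ for equal-length strings $\vec x,\vec a$, $\mathsf{K}_{\vec x}:=\mathsf{K}_{\{x_1,\dots,x_n\}}$, $\mathsf{K}_x:=\mathsf{K}_{\{x\}}$, $\{\vec a\}=\{a_1,\dots,a_n\}$. $\mathbf{LEL}$: axioms — propositional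 tautologies; $\mathsf{K}_X(\alpha\to\beta)\to(\mathsf{K}_X\alpha\to\mathsf{K}_X\beta)$; $\mathsf{K}_X\alpha\to\mathsf{K}_Y\alpha$ ($X\subseteq Y$); $[x:=a](\phi\to\psi)\to([x:=a]\phi\to[x:=a]\psi)$; $\langle x:=a\rangle\phi\to[x:=a]\phi$; $\phi\to[x:=a]\phi$ ($x\notin FV(\phi)$); $[y:=a]([x:=a]\phi\to\phi[y/x])$ ($\phi[y/x]$ admissible); $[x:=a][y:=b]\phi\to[y:=b][x:=a]\phi$ ($x\neq y$); $\bigwedge_{a\in\mathbf{A}}[x:=a]\phi\to\phi$; $\mathsf{K}_X\alpha\to\alpha$; $[\vec{x}:=\vec{a}](\neg\mathsf{K}_{\vec{x}}\alpha\to\mathsf{K}_{\vec{x}}[\vec{x}:=\vec{a}]\neg\mathsf{K}_{\vec{x}}\alpha)$; $[x:=a]\mathsf{K}_{x}\langle x:=a\rangle\top$; $[x:=a](p_x\to\mathsf{K}_{x}[x:=a]p_x)$; $[\vec{x}:=\vec{a}](\bigwedge_{b\in B}[x:=b]\bot\to\mathsf{K}_{\vec{x}}\bigwedge_{b\in B}[x:=b]\bot)$ with $B=\mathbf{A}\setminus\{\vec a\}$. Rules: modus ponens; from sentence $\alpha$ infer $\mathsf{K}_\emptyset\alpha$; from $\phi$ infer $[x:=a]\phi$. ($\alpha,\beta$ sentences; $\phi,\psi$ formulas.) The sentences in assignment normal form are generated by $\gamma ::= [x:=a]p_x \mid [x:=a]\bot \mid \top \mid \neg\gamma \mid (\gamma\wedge\gamma)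 \mid [\vec{x}:=\vec{a}]\mathsf{K}_{\vec{x}}\gamma$ (with $x\in\mathbf{X}$, $a\in\mathbf{A}$, $p\in\mathbf{P}$, and $\vec x,\vec a$ strings of variables and agents of equal length). *)

From HB Require Import structures.
From mathcomp Require Import all_boot.
From mathcomp Require Import finmap.

Set Implicit Arguments.
Unset Strict Implicit.
Unset Printing Implicit Defensive.

Local Open Scope fset_scope.

Section LEL.

(* A : agents (finite; nonemptiness is a hypothesis of the theorem),
   X : variables, P : predicate letters.  A and X are separate types,
   hence disjoint. *)
Variables (A : finType) (X : countType) (P : countType).

(* Raw formulas:  p_x | T | ~f | f /\ g | [x:=a] f | K_Y f.
   The side condition "the argument of K is a sentence" is imposed by [wf]. *)
Inductive form : Type :=
| FPred of P & X
| FTop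
| FNeg of form
| FAnd of form & form
| FAs of X & A & form
| FK of {fset X} & form.

Fixpoint fv (f : form) : {fset X} :=
  match f with
  | FPred _ x => [fset x]
  | FTop => fset0
  | FNeg g => fv g
  | FAnd g h => fv g `|` fv h
  | FAs x _ g => fv g `\ x
  | FK Y _ => Y
  end.

Fixpoint wf (f : form) : bool :=
  match f with
  | FPred _ _ | FTop => true
  | FNeg g => wf g
  | FAnd g h => wf g && wf h
  | FAs _ _ g => wf g
  | FK _ g => wf g && (fv g == fset0)
  end.

Definition sentence (f : form) : Prop := wf f /\ fv f = fset0.

Definition FBot : form := FNeg FTop.
Definition FImp (f g : form) : form := FNeg (FAnd f (FNeg g)).
Definition FIff (f g : form) : form := FAnd (FImp f g) (FImp g f).
Definition FDia (x : X) (a : A) (f : form) : form := FNeg (FAs x a (FNeg f)).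

Definition bigAnd (l : seq form) : form := foldr FAnd FTop l.

Fixpoint vAs (s : seq (X * A)) (f : form) : form :=
  match s with
  | [::] => f
  | (x, a) :: s' => FAs x a (vAs s' f)
  end.

Definition vars_of (s : seq (X * A)) : {fset X} := [fset p.1 | p in s].
Definition vK (s : seq (X * A)) (f : form) : form := FK (vars_of s) f.

Definition others (s : seq (X * A)) : {set A} :=
  [set b | b \notin [seq p.2 | p <- s]].

Fixpoint subst (y x : X) (f : form) : form :=
  match f with
  | FPred p z => FPred p (if z == x then y else z)
  | FTop => FTop
  | FNeg g => FNeg (subst y x g)
  | FAnd g h => FAnd (subst y x g) (subst y x h)
  | FAs z a g => if z == x then FAs z a g else FAs z a (subst y x g)
  | FK Y g => FK (if x \in Y then y |` (Y `\ x) else Y) g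
  end.

Fixpoint admissible (y x : X) (f : form) : bool :=
  match f with
  | FPred _ _ | FTop | FK _ _ => true
  | FNeg g => admissible y x g
  | FAnd g h => admissible y x g && admissible y x h
  | FAs z _ g =>
      if z == x then true
      else if z == y then x \notin fv g
      else admissible y x g
  end.

(* propositional valuation: non-boolean subformulas are atoms *)
Fixpoint tval (v : form -> bool) (f : form) : bool :=
  match f with
  | FTop => true
  | FNeg g => ~~ tval v g
  | FAnd g h => tval v g && tval v h
  | _ => v f
  end.

Definition tautology (f : form) : Prop := forall v, tval v f.

(* axiom schemas of LEL (sentence side conditions are enforced via [wf]) *)
Inductive lel_axiom : form -> Prop :=
| AxTaut f : tautology f -> lel_axiom f
| AxKdist Y a b :
    lel_axiom (FImp (FK Y (FImp a b)) (FImp (FK Y a) (FK Y b)))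
| AxKmono Y Z a : Y `<=` Z -> lel_axiom (FImp (FK Y a) (FK Z a))
| AxAsDist x a f g :
    lel_axiom (FImp (FAs x a (FImp f g)) (FImp (FAs x a f) (FAs x a g)))
| AxAsFun x a f : lel_axiom (FImp (FDia x a f) (FAs x a f))
| AxAsVac x a f : x \notin fv f -> lel_axiom (FImp f (FAs x a f))
| AxAsSubst y x a f :
    admissible y x f -> lel_axiom (FAs y a (FImp (FAs x a f) (subst y x f)))
| AxAsComm x y a b f :
    x != y -> lel_axiom (FImp (FAs x a (FAs y b f)) (FAs y b (FAs x a f)))
| AxAsCover x f :
    lel_axiom (FImp (bigAnd [seq FAs x a f | a <- enum A]) f)
| AxKT Y a : lel_axiom (FImp (FK Y a) a)
| AxKNeg s a :
    lel_axiom (vAs s (FImp (FNeg (vK s a)) (vK s (vAs s (FNeg (vK s a))))))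
| AxKAs x a : lel_axiom (FAs x a (FK [fset x] (FDia x a FTop)))
| AxKPred x a p :
    lel_axiom (FAs x a (FImp (FPred p x) (FK [fset x] (FAs x a (FPred p x)))))
| AxKOthers s x :
    lel_axiom (vAs s (FImp (bigAnd [seq FAs x b FBot | b <- enum (others s)])
                           (vK s (bigAnd [seq FAs x b FBot | b <- enum (others s)])))).

Inductive lel_thm : form -> Prop :=
| ThAx f : wf f -> lel_axiom f -> lel_thm f
| ThMP f g : lel_thm f -> lel_thm (FImp f g) -> lel_thm g
| ThNec a : fv a = fset0 -> lel_thm a -> lel_thm (FK fset0 a)
| ThAs x a f : lel_thm f -> lel_thm (FAs x a f).

Inductive anf : form -> Prop :=
| AnfPred x a p : anf (FAs x a (FPred p x))
| AnfBot x a : anf (FAs x a FBot)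
| AnfTop : anf FTop
| AnfNeg g : anf g -> anf (FNeg g)
| AnfAnd g h : anf g -> anf h -> anf (FAnd g h)
| AnfK s g : anf g -> anf (vAs s (vK s g)).

End LEL.

Arguments FTop {A X P}.
Arguments FBot {A X P}.

(* Assignments are pushed inwards.  Each operator [x:=a] is a normal box
   (distribution and necessitation) that is functional (<x:=a>f -> [x:=a]f)
   and vacuous on formulas without free x; hence, up to the disjunct
   [x:=a]_|_, it commutes with negation and conjunction and can be dropped in
   front of a formula not mentioning x.  So if the string s assigns every free
   variable of phi, then [s]phi is equivalent to [s]_|_ \/ [s']phi, where s'
   keeps only the last assignment of s to each free variable of phi.  By
   induction on phi this gives [s]phi an equivalent in assignment normal form:
   [s]_|_ is a disjunction of formulas [y:=b]_|_, an atom p_x leaves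
   [x:=a]p_x, and K_Y alpha, once the sentence alpha is replaced by its normal
   form gamma, leaves [s']K_Y gamma, where s' assigns exactly the variables of
   Y. *)

From Pilot Require Import Defs.
From HB Require Import structures.
From mathcomp Require Import all_boot.
From mathcomp Require Import finmap.

Set Implicit Arguments.
Unset Strict Implicit.
Unset Printing Implicit Defensive.
Local Open Scope fset_scope.

Section NormalForm.
Variables (A : finType) (X P : countType).
Notation formula := (form A X P).
Notation thm := (@lel_thm A X P).
Implicit Types (s : seq (X * A)) (f g h : formula).

Definition FOr f g : formula := FNeg (FAnd (FNeg f) (FNeg g)).

Lemma thm_wf f : thm f -> wf f.
Proof.
elim=> {f} [f Wf _ | f g _ _ _ /andP[_ Wg] | f Ff _ Wf | y b f _ Wf] //=.
by rewrite Wf Ff eqxx.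
Qed.

Ltac unfold_connectives := cbv delta [FIff FImp FOr FDia FBot]; simpl.

(* [Defs.tval] is qualified because [tval] also names the tuple projection. *)
Ltac decide_tautology :=
  let v := fresh "v" in
  move=> v; unfold_connectives;
  repeat match goal with
         | |- context [Defs.tval v ?f] => case: (Defs.tval v f)
         | |- context [v ?f] => case: (v f)
         end; done.

Ltac wf_auto :=
  unfold_connectives;
  repeat match goal with H : thm _ |- _ => move/thm_wf: H; unfold_connectives => ? end;
  repeat match goal with H : is_true (_ && _) |- _ => case/andP: H => ? ? end;
  repeat (apply/andP; split); done.

Lemma thm_taut f : wf f -> tautology f -> thm f.
Proof. by move=> Wf Tf; apply: ThAx Wf (AxTaut Tf). Qed.

Ltac prove_tautology := apply: thm_taut; [wf_auto | decide_tautology].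

Lemma thm_taut_mp f g : thm f -> wf g -> tautology (FImp f g) -> thm g.
Proof.
move=> Hf Wg T; apply: (ThMP Hf); apply: thm_taut T.
by rewrite /= (thm_wf Hf) Wg.
Qed.

Lemma thm_and f g : thm f -> thm g -> thm (FAnd f g).
Proof.
move=> Hf Hg; apply: (ThMP Hg); apply: (ThMP Hf).
by prove_tautology.
Qed.

Ltac follows_from H := apply: (thm_taut_mp H); [wf_auto | decide_tautology].

Lemma iff_trans f g h : thm (FIff f g) -> thm (FIff g h) -> thm (FIff f h).
Proof. by move=> Hfg Hgh; follows_from (thm_and Hfg Hgh). Qed.

Section Assignment.
Variables (x : X) (a : A).
Local Notation box := (FAs x a).

Lemma box_dist f g : wf f -> wf g ->
  thm (FImp (box (FImp f g)) (FImp (box f) (box g))).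
Proof. by move=> Wf Wg; apply: ThAx (AxAsDist _ _ _ _); rewrite /= Wf Wg. Qed.

Lemma box_mono f g : thm (FImp f g) -> thm (FImp (box f) (box g)).
Proof.
move=> Hfg; have /andP[Wf Wg] := thm_wf Hfg.
exact: ThMP (ThAs x a Hfg) (box_dist Wf Wg).
Qed.

Lemma box_mono2 f g h : thm (FImp f (FImp g h)) ->
  thm (FImp (box f) (FImp (box g) (box h))).
Proof.
move=> Hfgh; have /andP[_ /andP[Wg Wh]] := thm_wf Hfgh.
have Hf := box_mono Hfgh; have Hdist := box_dist Wg Wh.
by follows_from (thm_and Hf Hdist).
Qed.

Lemma box_congr f g : thm (FIff f g) -> thm (FIff (box f) (box g)).
Proof.
move=> Hfg.
have /box_mono Hf : thm (FImp f g) by follows_from Hfg.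
have /box_mono Hg : thm (FImp g f) by follows_from Hfg.
by follows_from (thm_and Hf Hg).
Qed.

Lemma box_functional f : wf f -> thm (FImp (FNeg (box f)) (box (FNeg f))).
Proof.
move=> Wf.
have Hfun : thm (FImp (FDia x a (FNeg f)) (box (FNeg f))).
  by apply: ThAx (AxAsFun _ _ _); wf_auto.
have /box_mono Hnn : thm (FImp (FNeg (FNeg f)) f).
  by prove_tautology.
by follows_from (thm_and Hfun Hnn).
Qed.

Lemma box_and f g : wf f -> wf g ->
  thm (FIff (box (FAnd f g)) (FAnd (box f) (box g))).
Proof.
move=> Wf Wg.
have /box_mono Hl : thm (FImp (FAnd f g) f) by prove_tautology.
have /box_mono Hr : thm (FImp (FAnd f g) g) by prove_tautology.
have /box_mono2 Hpair : thm (FImp f (FImp g (FAnd f g))).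
  by prove_tautology.
by follows_from (thm_and Hl (thm_and Hr Hpair)).
Qed.

Lemma box_neg f : wf f -> thm (FIff (box (FNeg f)) (FOr (box FBot) (FNeg (box f)))).
Proof.
move=> Wf.
have /box_mono2 Hcontra : thm (FImp (FNeg f) (FImp f FBot)).
  by prove_tautology.
have /box_mono Hbot : thm (FImp FBot (FNeg f)) by prove_tautology.
have Hfun := box_functional Wf.
by follows_from (thm_and Hcontra (thm_and Hbot Hfun)).
Qed.

Lemma box_or f g : wf f -> wf g -> thm (FIff (box (FOr f g)) (FOr (box f) (box g))).
Proof.
move=> Wf Wg.
have /box_mono Hl : thm (FImp f (FOr f g)) by prove_tautology.
have /box_mono Hr : thm (FImp g (FOr f g)) by prove_tautology.
have /box_mono2 Hcases : thm (FImp (FOr f g) (FImp (FNeg f) g)).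
  by prove_tautology.
have Hfun := box_functional Wf.
by follows_from (thm_and Hl (thm_and Hr (thm_and Hcases Hfun))).
Qed.

Lemma box_vacuous f : wf f -> x \notin fv f -> thm (FIff (box f) (FOr (box FBot) f)).
Proof.
move=> Wf xNf.
have Hpos : thm (FImp f (box f)) by apply: ThAx; [wf_auto | exact: AxAsVac].
have Hneg : thm (FImp (FNeg f) (box (FNeg f))) by apply: ThAx; [wf_auto | exact: AxAsVac].
have /box_mono Hbot : thm (FImp FBot f) by prove_tautology.
have /box_mono2 Hcontra : thm (FImp (FNeg f) (FImp f FBot)).
  by prove_tautology.
by follows_from (thm_and Hpos (thm_and Hneg (thm_and Hbot Hcontra))).
Qed.

End Assignment.

Lemma mem_vars_of z s : (z \in vars_of s) = (z \in map fst s).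
Proof. by apply/imfsetP/mapP => [[p Hp ->] | [p Hp ->]]; exists p. Qed.

Lemma vars_of_rcons s y b : vars_of (rcons s (y, b)) = y |` vars_of s.
Proof.
by apply/fsetP => z; rewrite in_fset1U !mem_vars_of map_rcons mem_rcons in_cons.
Qed.

Lemma wf_vAs s f : wf (vAs s f) = wf f.
Proof. by elim: s => [|[y b] s IH]. Qed.

Lemma fv_vAs s f : fv (vAs s f) = fv f `\` vars_of s.
Proof.
elim: s => [|[y b] s IH] /=; apply/fsetP => z.
  by rewrite in_fsetD mem_vars_of.
by rewrite IH in_fsetD1 !in_fsetD !mem_vars_of /= in_cons; case: (z == y).
Qed.

Lemma wf_vAs_bot s : wf (vAs s FBot : formula).
Proof. by rewrite wf_vAs. Qed.

Lemma fv_vAs_bot s : fv (vAs s FBot : formula) = fset0.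
Proof. by apply/fsetP => z; rewrite fv_vAs in_fsetD in_fset0 andbF. Qed.

Lemma vAs_rcons s y b f : vAs (rcons s (y, b)) f = vAs s (FAs y b f).
Proof. by elim: s => [|[z c] s IH] //=; rewrite IH. Qed.

Lemma vAs_congr s f g : thm (FIff f g) -> thm (FIff (vAs s f) (vAs s g)).
Proof. by elim: s => [|[y b] s IH] //= Hfg; apply/box_congr/IH. Qed.

Lemma vAs_and s f g : wf f -> wf g ->
  thm (FIff (vAs s (FAnd f g)) (FAnd (vAs s f) (vAs s g))).
Proof.
move=> Wf Wg; elim: s => [|[y b] s IH] /=; first by prove_tautology.
by apply: iff_trans (box_congr y b IH) _; apply: box_and; rewrite wf_vAs.
Qed.

Lemma vAs_neg s f : wf f ->
  thm (FIff (vAs s (FNeg f)) (FOr (vAs s FBot) (FNeg (vAs s f)))).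
Proof.
move=> Wf; elim: s => [|[y b] s IH] /=; first by prove_tautology.
have Hcongr := box_congr y b IH.
have Wsf : wf (vAs s f) by rewrite wf_vAs.
have Hor := @box_or y b (vAs s FBot) (FNeg (vAs s f)) (wf_vAs_bot s) Wsf.
have Hneg := box_neg y b Wsf.
have /(box_mono y b) Hbot : thm (FImp FBot (vAs s FBot)).
  by prove_tautology.
by follows_from (thm_and Hcongr (thm_and Hor (thm_and Hneg Hbot))).
Qed.

Fixpoint last_assigns (Y : {fset X}) s : seq (X * A) :=
  if s is (y, b) :: s' then
    if (y \in Y) && (y \notin vars_of s') then (y, b) :: last_assigns Y s'
    else last_assigns Y s'
  else [::].

Lemma mem_last_assigns Y s z :
  (z \in map fst (last_assigns Y s)) = (z \in Y) && (z \in map fst s).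
Proof.
elim: s => [|[y b] s IH] /=; first by rewrite andbF.
rewrite in_cons; case: ifP => Hy; rewrite /= ?in_cons IH;
  case: (eqVneq z y) => [->|] //=; move: Hy; rewrite mem_vars_of;
  by case: (y \in Y); case: (y \in map fst s).
Qed.

Lemma vars_last_assigns Y s : Y `<=` vars_of s -> vars_of (last_assigns Y s) = Y.
Proof.
move=> /fsubsetP sub; apply/fsetP => z; rewrite mem_vars_of mem_last_assigns -mem_vars_of.
by case Hz: (z \in Y) => //=; apply: sub.
Qed.

Lemma last_assigns_fset1 x s :
  x \in map fst s -> exists a, last_assigns [fset x] s = [:: (x, a)].
Proof.
elim: s => [|[y b] s IH] //=; rewrite in_cons.
case Hx: (x \in map fst s).
  move=> _; have [a Ha] := IH Hx; exists a.
  suff -> : (y \in [fset x]) && (y \notin vars_of s) = false by [].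
  by rewrite in_fset1 mem_vars_of; case: eqP => //= ->; rewrite Hx.
rewrite orbF /= => /eqP xy; subst x; exists b.
rewrite in_fset1 eqxx mem_vars_of Hx /=.
case E: (last_assigns [fset y] s) => [|p r] //.
have : p.1 \in map fst (last_assigns [fset y] s) by rewrite E /= in_cons eqxx.
by rewrite mem_last_assigns in_fset1 => /andP[/eqP ->]; rewrite Hx.
Qed.

Lemma vAs_last_assigns s f : wf f ->
  thm (FIff (vAs s f) (FOr (vAs s FBot) (vAs (last_assigns (fv f) s) f))).
Proof.
move=> Wf; elim: s => [|[y b] s IH] /=; first by prove_tautology.
have Wsf : wf (vAs s f) by rewrite wf_vAs.
case: ifP => [_ | Hy] /=.
  by apply: iff_trans (box_congr y b IH) _; apply: box_or; rewrite ?wf_vAs.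
have yNsf : y \notin fv (vAs s f).
  by rewrite fv_vAs in_fsetD; move: Hy; case: (y \in fv f); case: (y \in vars_of s).
have yNsbot : y \notin fv (vAs s FBot : formula) by rewrite fv_vAs_bot.
have Hf := box_vacuous b Wsf yNsf.
have Hbot := box_vacuous b (wf_vAs_bot s) yNsbot.
by follows_from (thm_and Hf (thm_and IH Hbot)).
Qed.

Lemma K_mono Y f g : fv f = fset0 -> fv g = fset0 -> thm (FImp f g) ->
  thm (FImp (FK Y f) (FK Y g)).
Proof.
move=> Ff Fg Hfg; have /andP[Wf Wg] : wf f && wf g := thm_wf Hfg.
have Ffg : fv (FImp f g) = fset0 by rewrite /= Ff Fg fsetU0.
have K0 := ThNec Ffg Hfg.
have KY : thm (FImp (FK fset0 (FImp f g)) (FK Y (FImp f g))).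
  apply: ThAx; last exact: AxKmono (fsub0set Y).
  by rewrite /= Wf Wg Ff Fg fsetU0 eqxx.
have Kdist : thm (FImp (FK Y (FImp f g)) (FImp (FK Y f) (FK Y g))).
  by apply: ThAx (AxKdist Y f g); rewrite /= Wf Wg Ff Fg fsetU0 eqxx.
by follows_from (thm_and K0 (thm_and KY Kdist)).
Qed.

Lemma K_congr Y f g : fv f = fset0 -> fv g = fset0 -> thm (FIff f g) ->
  thm (FIff (FK Y f) (FK Y g)).
Proof.
move=> Ff Fg Hfg.
have /(K_mono Y Ff Fg) Hl : thm (FImp f g) by follows_from Hfg.
have /(K_mono Y Fg Ff) Hr : thm (FImp g f) by follows_from Hfg.
by follows_from (thm_and Hl Hr).
Qed.

Lemma anf_sentence g : anf g -> sentence g.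
Proof.
rewrite /sentence; elim=> {g} [x a p | x a | | g _ [Wg Fg]
  | g h _ [Wg Fg] _ [Wh Fh] | s g _ [Wg Fg]] /=.
- by split=> //; apply/fsetP => z; rewrite in_fsetD1 in_fset1 in_fset0 andNb.
- by split=> //; apply/fsetP => z; rewrite in_fsetD1 in_fset0 andbF.
- by [].
- by [].
- by rewrite Wg Wh Fg Fh fsetU0.
- by rewrite wf_vAs fv_vAs /= Wg Fg eqxx fsetDv.
Qed.

Definition has_anf f := exists2 gamma, anf gamma & thm (FIff f gamma).

Lemma has_anf_anf g : anf g -> has_anf g.
Proof.
move=> Ag; exists g => //; have [Wg _] := anf_sentence Ag.
by prove_tautology.
Qed.

Lemma has_anf_equiv f g : thm (FIff f g) -> has_anf g -> has_anf f.
Proof. by move=> Hfg [gamma Ag Hg]; exists gamma => //; apply: iff_trans Hfg Hg. Qed.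

Lemma has_anf_neg f : has_anf f -> has_anf (FNeg f).
Proof. by move=> [gamma Ag Hf]; exists (FNeg gamma); [apply: AnfNeg | follows_from Hf]. Qed.

Lemma has_anf_and f g : has_anf f -> has_anf g -> has_anf (FAnd f g).
Proof.
move=> [gf Af Hf] [gg Ag Hg]; exists (FAnd gf gg); first exact: AnfAnd.
by follows_from (thm_and Hf Hg).
Qed.

Lemma has_anf_or f g : has_anf f -> has_anf g -> has_anf (FOr f g).
Proof. by move=> Hf Hg; apply/has_anf_neg/has_anf_and; apply: has_anf_neg. Qed.

Lemma has_anf_vAs_bot s : has_anf (vAs s FBot).
Proof.
elim: s => [|[y b] s IH] /=; first exact/has_anf_neg/has_anf_anf/AnfTop.
have yNsbot : y \notin fv (vAs s FBot : formula) by rewrite fv_vAs_bot.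
apply: has_anf_equiv (box_vacuous b (wf_vAs_bot s) yNsbot) _.
exact: has_anf_or (has_anf_anf (AnfBot P y b)) IH.
Qed.

Lemma has_anf_vAs_pred s p x : x \in vars_of s -> has_anf (vAs s (FPred A p x)).
Proof.
rewrite mem_vars_of => /last_assigns_fset1 [a Ha].
apply: has_anf_equiv (vAs_last_assigns s (isT : wf (FPred A p x))) _; rewrite /= Ha.
exact: has_anf_or (has_anf_vAs_bot s) (has_anf_anf (AnfPred _ _ _)).
Qed.

Lemma has_anf_vAs_K s Y g : anf g -> Y `<=` vars_of s -> has_anf (vAs s (FK Y g)).
Proof.
move=> Ag sub; have [Wg Fg] := anf_sentence Ag.
have WK : wf (FK Y g) by rewrite /= Wg Fg eqxx.
apply: has_anf_equiv (vAs_last_assigns s WK) _ => /=.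
apply: has_anf_or (has_anf_vAs_bot s) (has_anf_anf _).
have -> : FK Y g = vK (last_assigns Y s) g by rewrite /vK vars_last_assigns.
exact: AnfK.
Qed.

Lemma has_anf_vAs phi s : wf phi -> fv phi `<=` vars_of s -> has_anf (vAs s phi).
Proof.
elim: phi s => [p x | | f IHf | f IHf g IHg | x a f IHf | Y f IHf] s /= Wphi sub.
- by apply: has_anf_vAs_pred; apply: (fsubsetP sub); rewrite fset11.
- have Htop : thm (vAs s FTop : formula).
    by elim: s {sub} => [|[y b] s IH]; [apply: thm_taut | apply: ThAs].
  by apply: (has_anf_equiv _ (has_anf_anf (AnfTop A X P))); follows_from Htop.
- apply: has_anf_equiv (vAs_neg s Wphi) _.
  exact: has_anf_or (has_anf_vAs_bot s) (has_anf_neg (IHf s Wphi sub)).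
- case/andP: Wphi => Wf Wg; apply: has_anf_equiv (vAs_and s Wf Wg) _.
  apply: has_anf_and; [apply: IHf | apply: IHg] => //; apply: fsubset_trans sub.
    exact: fsubsetUl.
  exact: fsubsetUr.
- by rewrite -vAs_rcons; apply: IHf; rewrite // vars_of_rcons -fsubDset.
- case/andP: Wphi => Wf /eqP Ff.
  have sub0 : fv f `<=` vars_of ([::] : seq (X * A)) by rewrite Ff fsub0set.
  have [gamma Ag Hgamma] := IHf [::] Wf sub0.
  have [_ Fgamma] := anf_sentence Ag.
  apply: has_anf_equiv (vAs_congr s (K_congr Y Ff Fgamma Hgamma)) _.
  exact: has_anf_vAs_K.
Qed.

End NormalForm.

Theorem proposition6 (A : finType) (X P : countType) (hA : 0 < #|A|)
  (alpha : form A X P) :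
  sentence alpha ->
  exists gamma : form A X P, anf gamma /\ lel_thm (FIff alpha gamma).
Proof.
move=> [Walpha closed_alpha].
have [gamma Agamma Hgamma] : has_anf (vAs [::] alpha).
  by apply: has_anf_vAs; rewrite // closed_alpha fsub0set.
by exists gamma.
Qed.
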